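(* If $G$ is a connected graph on at least two vertices and $H$ is any graph, then $\chi_{\mu_2}(G\circ H)\le \theta(G^{[\natural 2]})\le \theta\big((G\circ H)^{[\natural 2]}\big)$. Moreover, both inequalities are sharp (each is attained with equality for suitable such $G$ and $H$).
   Context: The lexicographic product $G\circ H$ has vertex set $V(G)\times V(H)$, with $(g,h)$ adjacent to $(g',h')$ iff $gg'\in E(G)$, or $g=g'$ and $hh'\in E(H)$. The exact distance-$2$ graph $X^{[\natural 2]}$ has vertex set $V(X)$, two vertices being adjacent iff their distance in $X$ equals $2$. $\theta(X)$ is the clique cover number (minimum number of cliques partitioning $V(X)$). A set $M\subseteq V(X)$ is a $2$-distance mutual-visibility set if for every two vertices $u,v\in M$ there exists a shortest $u,v$-path of length at most $2$ none of whose internal vertices lies in $M$. $\chi_{\mu_2}(X)$ is the minimum cardinality of a partition of $V(X)$ into $2$-distance mutual-visibility sets. *)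

From HB Require Import structures.
From mathcomp Require Import all_boot.
From mathcomp Require Import boolp.

Set Implicit Arguments.
Unset Strict Implicit.
Unset Printing Implicit Defensive.

Definition sgraph (T : finType) (e : rel T) : Prop :=
  symmetric e /\ irreflexive e.

Section Graphs.
Variable T : finType.
Implicit Types (e : rel T) (u v : T).

Fixpoint walkb e u v (n : nat) : bool :=
  match n with
  | 0 => u == v
  | n'.+1 => [exists w, e u w && walkb e w v n']
  end.

Definition dist_eq e u v (k : nat) : bool :=
  walkb e u v k && [forall j : 'I_k, ~~ walkb e u v j].

Definition connected e : Prop := forall u v, exists k, walkb e u v k.

Definition exact_dist2 e : rel T := fun u v => dist_eq e u v 2.

(* a u,v-path whose internal vertices (in order) are p *)
Definition is_path e u v (p : seq T) : bool :=
  path e u (rcons p v) && uniq (u :: rcons p v).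

Definition is_clique e (A : {set T}) : Prop :=
  forall x y, x \in A -> y \in A -> x != y -> e x y.

(* 2-distance mutual-visibility set: for any two (distinct) vertices of M there
   is a shortest u,v-path of length at most 2 (length = size p + 1) with no
   internal vertex in M. *)
Definition mv2 e (M : {set T}) : Prop :=
  forall u v, u \in M -> v \in M -> u != v ->
    exists p : seq T,
      [/\ is_path e u v p, dist_eq e u v (size p).+1, (size p).+1 <= 2
        & all (fun w => w \notin M) p].

(* V(T) can be partitioned into (at most) k classes each satisfying P
   (empty classes allowed; this does not change the minimum). *)
Definition partition_into (P : {set T} -> Prop) (k : nat) : Prop :=
  exists f : T -> 'I_k, forall i : 'I_k, P [set x | f x == i].

(* minimum number of parts in such a partition (0 if none exists, which never
   happens for the properties used below). *)
Definition min_parts (P : {set T} -> Prop) : nat :=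
  match pselect (exists k, `[< partition_into P k >]) with
  | left h => ex_minn h
  | right _ => 0
  end.

Definition theta e : nat := min_parts (is_clique e).

Definition chi_mu2 e : nat := min_parts (mv2 e).

End Graphs.

Definition lexprod (T1 T2 : finType) (eG : rel T1) (eH : rel T2) : rel (T1 * T2) :=
  fun x y => eG x.1 y.1 || ((x.1 == y.1) && eH x.2 y.2).

Definition thm_hyp (T1 T2 : finType) (eG : rel T1) (eH : rel T2) : Prop :=
  [/\ sgraph eG, sgraph eH, connected eG, 1 < #|T1| & 0 < #|T2|].

(* Both inequalities pull an optimal partition back along a map.  Along the
   projection V(G o H) -> V(G), a clique A of G^[2] becomes A x V(H), a
   2-distance mutual-visibility set of G o H: two of its vertices in distinct
   G-fibres are at distance 2 through some (w, h) with w a common G-neighbour,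
   and w is not in A, being adjacent (hence not at distance 2) to a vertex of
   A; two vertices of one fibre {g} x V(H) are adjacent or joined through
   (w, h) for any neighbour w of g, which exists because G is connected with at
   least two vertices.  Along g |-> (g, h0), a clique of (G o H)^[2] becomes a
   clique of G^[2].  For G = K2 and H its complement all three numbers equal 2:
   V(G o H) is not a mutual-visibility set, while the two G-fibres are cliques
   of (G o H)^[2]. *)

From mathcomp Require Import all_boot.
From mathcomp Require Import boolp zify.
Set Implicit Arguments.
Unset Strict Implicit.

Section Distance.
Variables (T : finType) (e : rel T).
Implicit Types (u v : T).

Lemma walkb1 u v : walkb e u v 1 = e u v.
Proof.
apply/existsP/idP => [[w /andP[euw /eqP <-]] // | euv].
by exists v; rewrite euv eqxx.
Qed.

Lemma dist_eq1 u v : dist_eq e u v 1 = e u v && (u != v).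
Proof.
rewrite /dist_eq walkb1; congr (_ && _).
apply/forallP/idP => [H | neq_uv [j lt_j1]]; first by have := H ord0.
by change (~~ walkb e u v j); case: j lt_j1.
Qed.

Lemma dist_eq2 u v :
  dist_eq e u v 2 = [exists w, e u w && e w v] && (u != v) && ~~ e u v.
Proof.
rewrite /dist_eq.
have -> : walkb e u v 2 = [exists w, e u w && e w v].
  by apply: eq_existsb => w /=; congr (_ && _); exact: walkb1.
rewrite -andbA; congr (_ && _).
apply/forallP/andP => [H | [neq_uv not_euv] [j lt_j2]].
  split; first by have := H ord0.
  by have := H (Ordinal (isT : 1 < 2)); rewrite walkb1.
change (~~ walkb e u v j).
by case: j lt_j2 => [|[|j]] // _; rewrite walkb1.
Qed.

Lemma dist_eq2_via u w v :
  e u w -> e w v -> u != v -> ~~ e u v -> dist_eq e u v 2.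
Proof.
move=> euw ewv neq_uv not_euv; rewrite dist_eq2 neq_uv not_euv !andbT.
by apply/existsP; exists w; rewrite euw ewv.
Qed.

Lemma adj_neq (ie : irreflexive e) u v : e u v -> u != v.
Proof. by move=> euv; apply: contraTneq euv => ->; rewrite ie. Qed.

Lemma exact_dist2_clique_nbr (ie : irreflexive e) (A : {set T}) u w :
  is_clique (exact_dist2 e) A -> u \in A -> e u w -> w \notin A.
Proof.
move=> cliqueA uA euw; apply/negP => wA.
have := cliqueA u w uA wA (adj_neq ie euw).
by rewrite /exact_dist2 dist_eq2 euw andbF.
Qed.

Lemma connected_has_nbr :
  connected e -> 1 < #|T| -> forall u, exists v, e u v.
Proof.
move=> conn /card_gt1P[x [y [_ _ neq_xy]]] u.
have [v neq_uv] : exists v, u != v.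
  by case: (eqVneq u x) => [->|]; [exists y | exists x].
have [k] := conn u v; elim: k u neq_uv => [|k _] u /=; first by move/negbTE ->.
by move=> _ /existsP[w /andP[euw _]]; exists w.
Qed.

End Distance.

Section MinParts.
Variables (T : finType) (P : {set T} -> Prop).

Lemma min_parts_le k : partition_into P k -> min_parts P <= k.
Proof.
move=> Pk; rewrite /min_parts; case: pselect => [ex | nex].
  by case: ex_minnP => m _; apply; apply/asboolP.
by case: nex; exists k; apply/asboolP.
Qed.

Lemma partition_into_min_parts k :
  partition_into P k -> partition_into P (min_parts P).
Proof.
move=> Pk; rewrite /min_parts; case: pselect => [ex | nex].
  by case: ex_minnP => m /asboolP.
by case: nex; exists k; apply/asboolP.
Qed.

Lemma partition_into_card :
  (forall A : {set T}, #|A| <= 1 -> P A) -> partition_into P #|T|.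
Proof.
move=> P_small; exists enum_rank => i; apply: P_small.
apply/card_le1_eqP => x y; rewrite !inE => /eqP <- /eqP.
exact: enum_rank_inj.
Qed.

Lemma min_parts_gt1 (x0 : T) k :
  partition_into P k -> ~ P [set: T] -> 1 < min_parts P.
Proof.
move=> /partition_into_min_parts[f Pf] notP_T.
case: (min_parts P) f Pf => [|[|//]] f Pf.
  by case: (f x0).
case: notP_T; suff -> : [set: T] = [set x | f x == ord0] by exact: Pf.
by apply/setP => x; rewrite !inE (ord1 (f x)) eqxx.
Qed.

End MinParts.

Lemma min_parts_preim (T T' : finType) (P : {set T} -> Prop)
    (Q : {set T'} -> Prop) (phi : T' -> T) k :
  (forall A, P A -> Q (phi @^-1: A)) -> partition_into P k ->
  min_parts Q <= min_parts P.
Proof.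
move=> PQ /partition_into_min_parts[f Pf].
apply: min_parts_le; exists (f \o phi) => i.
have -> : [set x | (f \o phi) x == i] = phi @^-1: [set y | f y == i].
  by apply/setP => x; rewrite !inE.
exact: PQ.
Qed.

Lemma clique_card_le1 (T : finType) (e : rel T) (A : {set T}) :
  #|A| <= 1 -> is_clique e A.
Proof. by move=> /card_le1_eqP A1 x y xA yA; rewrite (A1 x y xA yA) eqxx. Qed.

Section Visibility.
Variables (T : finType) (e : rel T) (M : {set T}).

Definition visible2 (u v : T) : Prop :=
  exists p : seq T,
    [/\ is_path e u v p, dist_eq e u v (size p).+1, (size p).+1 <= 2
      & all (fun w => w \notin M) p].

Lemma mv2_card_le1 : #|M| <= 1 -> mv2 e M.
Proof. by move=> /card_le1_eqP M1 u v uM vM; rewrite (M1 u v uM vM) eqxx. Qed.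

Lemma visible2_adj u v : e u v -> u != v -> visible2 u v.
Proof.
move=> euv neq_uv; exists [::].
by rewrite /is_path /= euv !inE neq_uv dist_eq1 euv neq_uv.
Qed.

Lemma visible2_via u w v :
  e u w -> e w v -> u != v -> u != w -> w != v -> ~~ e u v -> w \notin M ->
  visible2 u v.
Proof.
move=> euw ewv neq_uv neq_uw neq_wv not_euv wM; exists [:: w]; split => //=.
- by rewrite /is_path /= euw ewv !inE negb_or neq_uw neq_uv neq_wv.
- exact: dist_eq2_via euw ewv neq_uv not_euv.
- by rewrite wM.
Qed.

End Visibility.

Section Lexprod.
Variables (T1 T2 : finType) (eG : rel T1) (eH : rel T2).
Local Notation eGH := (lexprod eG eH).

Section NoIsolatedVertex.
Hypotheses (sG : symmetric eG) (iG : irreflexive eG).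
Hypothesis G_nbr : forall g, exists w, eG g w.

Lemma mv2_lexprod_fibres (A : {set T1}) :
  is_clique (exact_dist2 eG) A -> mv2 eGH (fst @^-1: A).
Proof.
move=> cliqueA [g h] [g' h']; rewrite !inE /= => gA g'A neq.
have via w : eG g w -> eG w g' -> ~~ eGH (g, h) (g', h') ->
    visible2 eGH (fst @^-1: A) (g, h) (g', h').
  move=> egw ewg' not_adj.
  apply: (visible2_via (w := (w, h))) => //.
  - by rewrite /lexprod /= egw.
  - by rewrite /lexprod /= ewg'.
  - by rewrite xpair_eqE negb_and (adj_neq iG egw).
  - by rewrite xpair_eqE negb_and (adj_neq iG ewg').
  - by rewrite inE (exact_dist2_clique_nbr iG cliqueA gA egw).
have [eq_g | neq_g] := eqVneq g g'.
  subst g'; have [w egw] := G_nbr g.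
  case ehh: (eH h h').
    by apply: visible2_adj => //; rewrite /lexprod /= eqxx ehh orbT.
  have ewg : eG w g by rewrite sG.
  by apply: via egw ewg _; rewrite /lexprod /= (iG g) eqxx ehh.
have := cliqueA g g' gA g'A neq_g.
rewrite /exact_dist2 dist_eq2.
case/andP=> /andP[/existsP[w /andP[egw ewg']] _] /negbTE not_adj.
by apply: via egw ewg' _; rewrite /lexprod /= not_adj (negbTE neq_g).
Qed.

Lemma chi_mu2_lexprod_le : chi_mu2 eGH <= theta (exact_dist2 eG).
Proof.
apply: (min_parts_preim mv2_lexprod_fibres).
exact/partition_into_card/clique_card_le1.
Qed.

End NoIsolatedVertex.

Lemma clique_exact_dist2_slice (h0 : T2) (B : {set T1 * T2}) :
  is_clique (exact_dist2 eGH) B ->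
  is_clique (exact_dist2 eG) ((fun g => (g, h0)) @^-1: B).
Proof.
move=> cliqueB g g'; rewrite !inE => gB g'B neq_g.
have := cliqueB _ _ gB g'B; rewrite xpair_eqE negb_and neq_g => /(_ isT).
rewrite /exact_dist2 !dist_eq2 neq_g andbT /lexprod /= (negbTE neq_g) orbF.
case/andP=> /andP[/existsP[[a b] /andP[ega eag]] _] /negbTE not_adj.
move: ega eag; rewrite not_adj andbT.
have [<- | _] := eqVneq g a; first by rewrite /= not_adj (negbTE neq_g).
have [-> | _] := eqVneq a g'; first by rewrite /= not_adj.
by rewrite /= !orbF => ega eag'; apply/existsP; exists a; rewrite ega eag'.
Qed.

Lemma theta_exact_dist2_lexprod (h0 : T2) :
  theta (exact_dist2 eG) <= theta (exact_dist2 eGH).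
Proof.
apply: (min_parts_preim (@clique_exact_dist2_slice h0)).
exact/partition_into_card/clique_card_le1.
Qed.

End Lexprod.

Lemma thm_hyp_bounds (T1 T2 : finType) (eG : rel T1) (eH : rel T2) :
  thm_hyp eG eH ->
  chi_mu2 (lexprod eG eH) <= theta (exact_dist2 eG) /\
  theta (exact_dist2 eG) <= theta (exact_dist2 (lexprod eG eH)).
Proof.
case=> [[sG iG] _ conn gt1 /card_gt0P[h0 _]]; split.
  exact: chi_mu2_lexprod_le sG iG (connected_has_nbr conn gt1).
exact: theta_exact_dist2_lexprod h0.
Qed.

Definition K2 : rel bool := fun x y => x != y.
Definition E2 : rel bool := fun _ _ => false.

Lemma thm_hyp_K2_E2 : thm_hyp K2 E2.
Proof.
split; rewrite ?card_bool //.
- by split => [x y | x]; rewrite /K2 /= ?eqxx // eq_sym.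
- move=> u v; have [-> | neq_uv] := eqVneq u v; first by exists 0; exact: eqxx.
  by exists 1; rewrite walkb1.
Qed.

Lemma chi_mu2_K2_E2 : 1 < chi_mu2 (lexprod K2 E2).
Proof.
apply: (min_parts_gt1 (false, false)) (partition_into_card (mv2_card_le1 _)) _.
move=> /(_ (false, false) (false, true) (in_setT _) (in_setT _) isT).
case=> p [_ dist_p size_p hidden].
case: p dist_p size_p hidden => [|w [|//]]; first by rewrite dist_eq1.
by move=> _ _ /=; rewrite in_setT.
Qed.

Lemma theta_exact_dist2_K2_E2 : theta (exact_dist2 (lexprod K2 E2)) <= 2.
Proof.
have fibre_clique (A : {set bool}) :
    #|A| <= 1 -> is_clique (exact_dist2 (lexprod K2 E2)) (fst @^-1: A).
  move=> /card_le1_eqP A1 [a b] [a' b']; rewrite !inE /= => aA a'A.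
  rewrite (A1 _ _ aA a'A) => neq.
  apply: (dist_eq2_via (w := (~~ a, b))) => //;
    by rewrite /lexprod /K2 /E2; case: (a).
rewrite -[2]card_bool.
have small_parts := partition_into_card (fun A : {set bool} => @id (#|A| <= 1)).
apply: leq_trans (min_parts_preim fibre_clique small_parts) _.
exact: min_parts_le small_parts.
Qed.

Lemma K2_E2_all_two :
  [/\ chi_mu2 (lexprod K2 E2) = 2, theta (exact_dist2 K2) = 2
    & theta (exact_dist2 (lexprod K2 E2)) = 2].
Proof.
have [le1 le2] := thm_hyp_bounds thm_hyp_K2_E2.
have lo := chi_mu2_K2_E2; have hi := theta_exact_dist2_K2_E2.
by split; lia.
Qed.

Theorem theorem4p1 :
  (forall (T1 T2 : finType) (eG : rel T1) (eH : rel T2),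
      thm_hyp eG eH ->
      chi_mu2 (lexprod eG eH) <= theta (exact_dist2 eG) /\
      theta (exact_dist2 eG) <= theta (exact_dist2 (lexprod eG eH)))
  /\ (exists (T1 T2 : finType) (eG : rel T1) (eH : rel T2),
        thm_hyp eG eH /\
        chi_mu2 (lexprod eG eH) = theta (exact_dist2 eG))
  /\ (exists (T1 T2 : finType) (eG : rel T1) (eH : rel T2),
        thm_hyp eG eH /\
        theta (exact_dist2 eG) = theta (exact_dist2 (lexprod eG eH))).
Proof.
have [chi2 thetaG2 thetaGH2] := K2_E2_all_two.
split; [exact: thm_hyp_bounds | split; exists bool, bool, K2, E2].
  by rewrite chi2 thetaG2; split; first exact: thm_hyp_K2_E2.
by rewrite thetaG2 thetaGH2; split; first exact: thm_hyp_K2_E2.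
Qed.
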